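(* Let $a_1,\dots,a_n\in\overline K$ ($n\ge2$) be pairwise distinct, let $A$ be the associated magic matrix and $(\mathcal R,\gamma)$ the associated tree. Then $A=\sum_{T\in\mathcal R}\gamma(T)A(T)$.
   Context: $\overline{K}=\bigcup_{d\ge1}\mathbf{C}[[x^{1/d}]][1/x]$ with valuation $\nu$. $m_{i,j}=\nu(a_i-a_j)$, $m_i=\sum_{j\ne i}m_{i,j}$; $A$ has entries $-m_{i,j}$ off the diagonal and $m_i$ on the diagonal. $T_0=\{1,\dots,n\}$; a ''rameau'' is $T\subset T_0$ with $|T|\ge2$ such that $m_{i,j}>m_{i,k}=m_{j,k}$ for all $i\ne j$ in $T$ and $k\notin T$; $\mathcal R$ is the set of rameaux. $\alpha(T)=\inf\{m_{i,j}:i\ne j\in T\}$; $\gamma(T_0)=\alpha(T_0)$ and, for $T\neq T_0$, $\gamma(T)=\alpha(T)-\alpha(T')$ with $T'$ the smallest element of $\mathcal R$ strictly containing $T$. For $T\subset T_0$ of cardinality $n(T)\ge2$, $A(T)=(\alpha_{i,j})$ with $\alpha_{i,j}=-1$ if $i\ne j$ and $\{i,j\}\subset T$, $\alpha_{i,i}=n(T)-1$ if $i\in T$, and $0$ otherwise. *)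

From HB Require Import structures.
From mathcomp Require Import all_boot all_order all_algebra.
From mathcomp Require Import boolp.
From mathcomp Require Import Rstruct.
From mathcomp Require Import complex.
From Stdlib Require Rdefinitions.
Set Implicit Arguments.
Unset Strict Implicit.
Unset Printing Implicit Defensive.
Import Order.TTheory GRing.Theory Num.Theory.
Local Open Scope ring_scope.

Definition Cplx : Type := complex Rdefinitions.R.

(* An element of Kbar = \bigcup_d C[[x^{1/d}]][1/x], represented as
   x^(pshift / d) * \sum_(k >= 0) pcoef k * x^(k / d), with d = (pden).+1 >= 1. *)
Record puiseux := Puiseux {
  pden : nat;          (* d - 1 *)
  pshift : int;
  pcoef : nat -> Cplx }.

Definition pd (f : puiseux) : nat := (pden f).+1.

Definition psub (f g : puiseux) : puiseux :=
  let df := pd f in let dg := pd g in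
  let kf := pshift f * (dg%:Z) in let kg := pshift g * (df%:Z) in
  let k := Num.min kf kg in
  let sf := absz (kf - k) in let sg := absz (kg - k) in
  let cf n := if leq sf n && dvdn dg (n - sf)%N then pcoef f ((n - sf) %/ dg) else 0 in
  let cg n := if leq sg n && dvdn df (n - sg)%N then pcoef g ((n - sg) %/ df) else 0 in
  Puiseux (df * dg).-1 k (fun n => cf n - cg n).

Definition pzero (f : puiseux) : Prop := forall k, pcoef f k = 0.

(* the x-adic valuation nu : Kbar^* -> Q (value 0 is a dummy for f = 0) *)
Definition pval (f : puiseux) : rat :=
  match pselect (exists k, pcoef f k != 0) with
  | left h => ((pshift f + (ex_minn h)%:Z)%:~R) / (pd f)%:R
  | right _ => 0
  end.

Section Tree.
Variables (n : nat) (a : 'I_n -> puiseux).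

Definition mm (i j : 'I_n) : rat := pval (psub (a i) (a j)).
Definition mrow (i : 'I_n) : rat := \sum_(j | j != i) mm i j.

Definition magic : 'M[rat]_n :=
  \matrix_(i, j) (if i == j then mrow i else - mm i j).

Definition rameau (T : {set 'I_n}) : bool :=
  (2 <= #|T|)%N &&
  [forall i in T, forall j in T, forall k in ~: T,
     (i != j) ==> ((mm i j > mm i k) && (mm i k == mm j k))].

Definition alpha (T : {set 'I_n}) : rat :=
  let s := [seq mm p.1 p.2 | p <- enum [set p : 'I_n * 'I_n |
                 (p.1 \in T) && (p.2 \in T) && (p.1 != p.2)]] in
  \big[Num.min/head 0 s]_(x <- s) x.

(* the smallest rameau strictly containing T (setT by default) *)
Definition parent (T : {set 'I_n}) : {set 'I_n} :=
  match [pick U | rameau U && (T \proper U) &&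
           [forall V, (rameau V && (T \proper V)) ==> (U \subset V)]] with
  | Some U => U
  | None => setT
  end.

Definition gamma (T : {set 'I_n}) : rat :=
  if T == setT then alpha T else alpha T - alpha (parent T).

Definition AT (T : {set 'I_n}) : 'M[rat]_n :=
  \matrix_(i, j) (if (i \in T) && (j \in T) then
                    (if i == j then (#|T|%:R - 1) else -1) else 0).

End Tree.

From HB Require Import structures.
From mathcomp Require Import all_boot all_order all_algebra.
From mathcomp Require Import boolp Rstruct complex ring.
Import Order.TTheory GRing.Theory Num.Theory.
Set Implicit Arguments.
Unset Strict Implicit.

Local Open Scope ring_scope.

(* Off the diagonal, the (i, j) entry of the right-hand side is minus the sum
   of gamma(T) over the rameaux T containing i and j.  Since nu is ultrametric,
   these are exactly the rameaux containing the ball {k | m_{i,k} >= m_{i,j}},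
   itself a rameau with alpha = m_{i,j}; they form a chain up to T_0, along
   which gamma telescopes to alpha(ball) = m_{i,j}.  The diagonals then agree
   because both matrices have zero row sums. *)

(* The coefficient of x^q in x^(s/d) * \sum_k c_k x^(k/d), i.e. c_(q d - s). *)
Definition coef (f : puiseux) (q : rat) : Cplx :=
  let t := q * (pd f)%:R - (pshift f)%:~R in
  if t \is a Num.nat then pcoef f (Num.truncn t) else 0.

Lemma pd_psub f g : pd (psub f g) = (pd f * pd g)%N.
Proof. by rewrite [LHS]/pd /psub; cbn [pden]; rewrite prednK // muln_gt0. Qed.

(* The reindexing performed by [psub] on each operand. *)
Lemma coef_dilate_shift (c : nat -> Cplx) (d s : nat) (u t : rat) :
  (0 < d)%N -> t = d%:R * u + s%:R ->
  (if t \is a Num.nat then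
     (if (s <= Num.truncn t)%N && (d %| Num.truncn t - s)%N
      then c ((Num.truncn t - s) %/ d)%N else 0) else 0)
  = (if u \is a Num.nat then c (Num.truncn u) else 0).
Proof.
move=> d_gt0 ->.
have [/natrP[m ->]|u_nat] := boolP (u \is a Num.nat).
  by rewrite -natrM -natrD !natr_nat !natrK leq_addl addnK dvdn_mulr // mulKn.
case: ifP => // /natrP[N eN]; rewrite eN natrK.
case: ifP => // /andP[sN /dvdnP[k eNk]]; exfalso; move/negP: u_nat; apply.
have {eNk} eN' : N = (k * d + s)%N by rewrite -eNk subnK.
have dn0 : (d%:R : rat) != 0 by rewrite pnatr_eq0 -lt0n.
move: eN; rewrite eN' natrD natrM [_ * d%:R]mulrC => /addIr/(mulfI dn0) ->.
exact: natr_nat.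
Qed.

Lemma rescale_shift (q : rat) (df dg : nat) (s k : int) : k <= s * dg%:Z ->
  q * (df * dg)%:R - k%:~R =
  dg%:R * (q * df%:R - s%:~R) + (absz (s * dg%:Z - k)%R)%:R.
Proof.
move=> k_le; rewrite -[(absz _)%:R]/((absz _)%:Z%:~R) gez0_abs ?subr_ge0 //.
rewrite intrB intrM natrM; have -> : ((dg%:Z)%:~R : rat) = dg%:R by [].
ring.
Qed.

Lemma coef_psub f g q : coef (psub f g) q = coef f q - coef g q.
Proof.
rewrite /coef pd_psub /=; have -> : forall b (x y : Cplx),
  (if b then x - y else 0) = (if b then x else 0) - (if b then y else 0).
  by case; rewrite ?subr0.
congr (_ - _).
  by apply: coef_dilate_shift => //; apply: rescale_shift; rewrite ge_min lexx.
rewrite mulnC; apply: coef_dilate_shift => //.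
by apply: rescale_shift; rewrite ge_min lexx orbT.
Qed.

Lemma coef_pval_le f q : coef f q != 0 -> pval f <= q.
Proof.
rewrite /coef; case: ifP => [/natrP[m em]|]; last by rewrite eqxx.
rewrite em natrK => cm_neq0; rewrite /pval; case: pselect => [h|h]; last first.
  by exfalso; apply: h; exists m.
case: (ex_minnP h) => m0 _ /(_ m cm_neq0) m0_le.
rewrite ler_pdivrMr ?ltr0n // -(subrK (pshift f)%:~R (q * _)) em addrC intrD.
by rewrite lerD2r ler_nat.
Qed.

Lemma coef_pval_neq0 f : ~ pzero f -> coef f (pval f) != 0.
Proof.
move=> f_neq0; rewrite /pval; case: pselect => [h|h]; last first.
  by exfalso; apply: f_neq0 => k; apply/eqP/negPn/negP => ck; apply: h; exists k.
case: (ex_minnP h) => m0 cm0 _.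
rewrite /coef mulfVK ?pnatr_eq0 // intrD addrC addKr.
by rewrite -[(m0%:Z)%:~R]/(m0%:R : rat) natr_nat natrK.
Qed.

Lemma pval_psubC f g : ~ pzero (psub f g) -> ~ pzero (psub g f) ->
  pval (psub f g) = pval (psub g f).
Proof.
have coefC q : coef (psub g f) q = - coef (psub f g) q by rewrite !coef_psub opprB.
move=> fg_neq0 gf_neq0; apply/eqP; rewrite eq_le; apply/andP; split.
  by apply: coef_pval_le; rewrite -oppr_eq0 -coefC coef_pval_neq0.
by apply: coef_pval_le; rewrite coefC oppr_eq0 coef_pval_neq0.
Qed.

Lemma pval_psub_ge_min f g h : ~ pzero (psub f h) ->
  Num.min (pval (psub f g)) (pval (psub g h)) <= pval (psub f h).
Proof.
move=> fh_neq0; have := coef_pval_neq0 fh_neq0; set q := pval _.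
have -> : coef (psub f h) q = coef (psub f g) q + coef (psub g h) q.
  by rewrite !coef_psub addrA subrK.
have [-> | /coef_pval_le fg_le _] := eqVneq (coef (psub f g) q) 0.
  by rewrite add0r => /coef_pval_le gh_le; rewrite ge_min gh_le orbT.
by rewrite ge_min fg_le.
Qed.

Section Rameaux.
Variables (n : nat) (a : 'I_n -> puiseux).

Lemma rameauP (T : {set 'I_n}) :
  reflect ((2 <= #|T|)%N /\ forall i j k, i \in T -> j \in T -> k \notin T ->
             i != j -> mm a i k < mm a i j /\ mm a i k = mm a j k)
          (rameau a T).
Proof.
apply: (iffP andP) => -[cardT sepT]; split=> //.
  move=> i j k iT jT kT ij.
  move/forall_inP/(_ i iT)/forall_inP/(_ j jT)/forall_inP: sepT.
  by move/(_ k); rewrite in_setC => /(_ kT); rewrite ij => /andP[-> /eqP].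
apply/forall_inP => i iT; apply/forall_inP => j jT; apply/forall_inP => k.
rewrite in_setC => kT; apply/implyP => ij.
by have [-> ->] := sepT i j k iT jT kT ij; rewrite eqxx.
Qed.

Lemma rameau_laminar (U V : {set 'I_n}) t : rameau a U -> rameau a V ->
  t \in U -> t \in V -> (U \subset V) || (V \subset U).
Proof.
move=> /rameauP[_ sepU] /rameauP[_ sepV] tU tV.
have [//|/subsetPn[x xU xV]] := boolP (U \subset V).
apply/subsetP => y yV; apply/negPn/negP => yU.
have tx : t != x by apply: contraNneq xV => <-.
have ty : t != y by apply: contraNneq yU => <-.
have [lt_ty_tx _] := sepU t x y tU xU yU tx.
have [lt_tx_ty _] := sepV t y x tV yV xV ty.
by have := lt_trans lt_ty_tx lt_tx_ty; rewrite ltxx.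
Qed.

Lemma rameau_setT : (2 <= n)%N -> rameau a setT.
Proof.
by move=> n_ge2; apply/rameauP; split=> [|i j k _ _]; rewrite ?cardsT ?card_ord ?inE.
Qed.

Lemma parent_spec (T : {set 'I_n}) : rameau a T -> T != setT ->
  [/\ rameau a (parent a T), T \proper parent a T &
     forall V, rameau a V -> T \proper V -> parent a T \subset V].
Proof.
move=> rT T_neqT; have cardT := (rameauP _ rT).1.
have [t tT] : exists t, t \in T by apply/set0Pn; rewrite -card_gt0 (leq_trans _ cardT).
have rS : rameau a setT && (T \proper setT).
  by rewrite properT T_neqT rameau_setT // -(card_ord n) (leq_trans cardT (max_card _)).
have [U /andP[rU TU] U_min] :=
  @arg_minnP _ setT (fun V => rameau a V && (T \proper V)) (fun V => #|V|) rS.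
rewrite /parent; case: pickP => [P /andP[/andP[rP TP] /forallP P_min] | no_min].
  by split=> // V rV TV; apply: (implyP (P_min V)); rewrite rV.
have /negP[] := no_min U; rewrite rU TU; apply/forallP => V; apply/implyP => /[dup] rTV.
case/andP=> rV TV; have tU := subsetP (proper_sub TU) t tT.
have [//|VU] := orP (rameau_laminar rU rV tU (subsetP (proper_sub TV) t tT)).
suff /eqP-> : V == U by []; by rewrite eqEcard VU U_min.
Qed.

(* The rameaux above T form a chain, along which gamma telescopes. *)
Lemma sum_gamma_supsets (T : {set 'I_n}) : rameau a T ->
  \sum_(U | rameau a U && (T \subset U)) gamma a U = alpha a T.
Proof.
have [m] := ubnP #|~: T|; elim: m T => // m IHm T cardCT.
have [-> rT | T_neqT rT] := eqVneq T setT.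
  rewrite (big_pred1 setT) => [|U]; first by rewrite /gamma eqxx.
  by rewrite /= subTset andb_idl // => /eqP->.
have [rP TP P_min] := parent_spec rT T_neqT.
rewrite (bigD1 T) /=; last by rewrite rT subxx.
rewrite (eq_bigl (fun U => rameau a U && (parent a T \subset U))) => [|U]; last first.
  have [rU /=|//] := boolP (rameau a U).
  rewrite andbC eq_sym -properEneq; apply/idP/idP; first exact: P_min.
  exact: proper_sub_trans.
rewrite IHm ?/gamma ?(negPf T_neqT) ?subrK //.
by rewrite -ltnS (leq_trans _ cardCT) // ltnS proper_card // properC.
Qed.

Hypothesis a_distinct : forall i j : 'I_n, i != j -> ~ pzero (psub (a i) (a j)).

Lemma mm_sym i j : mm a i j = mm a j i.
Proof.
have [-> // | ij] := eqVneq i j.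
by rewrite /mm pval_psubC //; apply: a_distinct; rewrite // eq_sym.
Qed.

Lemma mm_ge_min i j k : i != k -> Num.min (mm a i j) (mm a j k) <= mm a i k.
Proof. by move=> ik; apply: pval_psub_ge_min; apply: a_distinct. Qed.

(* Larger valuation means closer: this is the closed ball around [i] through [j]. *)
Definition ball i j : {set 'I_n} := [set k | (k == i) || (mm a i j <= mm a i k)].

Lemma ball_center i j : i \in ball i j.
Proof. by rewrite inE eqxx. Qed.

Lemma ball_endpoint i j : j \in ball i j.
Proof. by rewrite inE lexx orbT. Qed.

Lemma mm_ball_out i j x k : x \in ball i j -> k \notin ball i j ->
  mm a x k = mm a i k.
Proof.
rewrite !inE negb_or -ltNge => x_in /andP[k_neq_i lt_k_j].
have [-> // | x_neq_i] := eqVneq x i.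
have lt_k_x : mm a i k < mm a i x.
  by move: x_in; rewrite (negPf x_neq_i) => /(lt_le_trans lt_k_j).
have x_neq_k : x != k by apply: contraTneq lt_k_x => ->; rewrite ltxx.
apply/eqP; rewrite eq_le; apply/andP; split.
  have i_neq_k : i != k by rewrite eq_sym.
  by have := mm_ge_min x i_neq_k; rewrite ge_min leNgt lt_k_x.
have := mm_ge_min i x_neq_k; rewrite (mm_sym x i) ge_min => /orP[le_x_xk | //].
exact: ltW (lt_le_trans lt_k_x le_x_xk).
Qed.

Lemma mm_ball_pair i j x y : x \in ball i j -> y \in ball i j -> x != y ->
  mm a i j <= mm a x y.
Proof.
rewrite !inE => x_in y_in xy.
have [ex | x_neq_i] := eqVneq x i.
  by move: y_in; rewrite -ex eq_sym (negPf xy).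
have [ey | y_neq_i] := eqVneq y i.
  by move: x_in; rewrite -ey (negPf xy) [mm a y x]mm_sym.
move: x_in y_in; rewrite (negPf x_neq_i) (negPf y_neq_i) /= => x_ge y_ge.
by apply: le_trans (mm_ge_min i xy); rewrite le_min (mm_sym x i) x_ge.
Qed.

Lemma ball_rameau i j : i != j -> rameau a (ball i j).
Proof.
move=> ij; apply/rameauP; split.
  have <- : #|[set i; j]| = 2%N by rewrite cards2 ij.
  apply: subset_leq_card.
  by apply/subsetP => x /set2P[]->; rewrite ?ball_center ?ball_endpoint.
move=> x y k x_in y_in k_out xy; rewrite !(mm_ball_out _ k_out) //; split=> //.
move: k_out; rewrite inE negb_or -ltNge => /andP[_ lt_k_j].
exact: lt_le_trans lt_k_j (mm_ball_pair x_in y_in xy).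
Qed.

Lemma alpha_ball i j : i != j -> alpha a (ball i j) = mm a i j.
Proof.
move=> ij; rewrite /alpha; set s := map _ _.
have s_ge x : x \in s -> mm a i j <= x.
  by case/mapP => p; rewrite mem_enum inE => /andP[/andP[? ?] ?] ->; apply: mm_ball_pair.
have ij_s : mm a i j \in s.
  apply/mapP; exists (i, j) => //.
  by rewrite mem_enum inE ball_center ball_endpoint ij.
apply/eqP; rewrite eq_le ge_bigmin_seq //= big_seq le_bigmin // s_ge //.
by move: ij_s; case: (s) => //= x s' _; apply: mem_head.
Qed.

Lemma ball_subset_rameau i j T : i != j -> rameau a T ->
  (i \in T) && (j \in T) = (ball i j \subset T).
Proof.
move=> ij /rameauP[_ sepT]; apply/idP/idP => [/andP[iT jT] | /subsetP sub_T]; last first.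
  by rewrite !sub_T ?ball_center ?ball_endpoint.
apply/subsetP => k; apply: contraLR => kT; rewrite inE negb_or -ltNge.
have [lt_k_j _] := sepT i j k iT jT kT ij.
by rewrite lt_k_j andbT; apply: contraNneq kT => ->.
Qed.

Lemma sum_gamma_pair i j : i != j ->
  \sum_(T | rameau a T && ((i \in T) && (j \in T))) gamma a T = mm a i j.
Proof.
move=> ij; rewrite -(alpha_ball ij) -(sum_gamma_supsets (ball_rameau ij)).
by apply: eq_bigl => T; have [rT | //] := boolP (rameau a T); apply: ball_subset_rameau.
Qed.

End Rameaux.

Lemma eq_mx_row_sum0 (R : zmodType) n (A B : 'M[R]_n) :
  (forall i, \sum_j A i j = 0) -> (forall i, \sum_j B i j = 0) ->
  (forall i j, i != j -> A i j = B i j) -> A = B.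
Proof.
move=> A_sum0 B_sum0 eqAB; apply/matrixP => i j.
have [<- {j} | ] := eqVneq i j; last exact: eqAB.
have diagE (C : 'M[R]_n) : (forall k, \sum_j C k j = 0) ->
    C i i = - \sum_(j | j != i) C i j.
  by move=> /(_ i); rewrite (bigD1 i) //= => /eqP; rewrite addr_eq0 => /eqP.
rewrite (diagE A) // (diagE B) //; congr (- _).
by apply: eq_bigr => j ji; apply: eqAB; rewrite eq_sym.
Qed.

Lemma magic_row_sum n (a : 'I_n -> puiseux) i : \sum_j magic a i j = 0.
Proof.
rewrite (bigD1 i) //= mxE eqxx /mrow; apply/eqP; rewrite addr_eq0 -sumrN.
by apply/eqP/eq_bigr => j ji; rewrite mxE eq_sym (negPf ji) opprK.
Qed.

Lemma AT_row_sum n (T : {set 'I_n}) i : \sum_j AT T i j = 0.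
Proof.
have [iT | iT] := boolP (i \in T); last first.
  by apply: big1 => j _; rewrite mxE (negPf iT).
rewrite (bigD1 i) //= mxE iT eqxx /=.
rewrite (eq_bigr (fun j => if j \in T then -1 else 0)) => [|j ji]; last first.
  by rewrite mxE iT eq_sym (negPf ji).
rewrite -big_mkcondr sumr_const (cardD1 i) iT add1n -addn1 natrD addrK mulNrn.
exact: subrr.
Qed.

Theorem mainTheorem5 (n : nat) (a : 'I_n -> puiseux) :
  (2 <= n)%N ->
  (forall i j : 'I_n, i != j -> ~ pzero (psub (a i) (a j))) ->
  magic a = \sum_(T : {set 'I_n} | rameau a T) gamma a T *: AT T.
Proof.
move=> _ a_distinct; apply: eq_mx_row_sum0 => [i | i | i j ij].
- exact: magic_row_sum.
- under eq_bigr => j _ do rewrite summxE.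
  rewrite exchange_big big1 // => T _.
  under eq_bigr => j _ do rewrite mxE.
  by rewrite -mulr_sumr AT_row_sum mulr0.
rewrite mxE (negPf ij) summxE -(sum_gamma_pair a_distinct ij) -sumrN big_mkcondr.
apply: eq_bigr => T _; rewrite !mxE (negPf ij).
by case: ifP; rewrite ?mulrN1 ?mulr0.
Qed.
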